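(* For any $0\le i\le k\le r$, if $\mathscr I=[I_0,\dots,I_k]$ is a prime ideal of $\Omega_{H_k}$, then its restriction $[I_0,\dots,I_i]$ is a prime ideal of $\Omega_{H_i}$.
   Context: Fix a prime $p$ and an integer $r\ge0$. For $0\le k\le r$ let $R_k$ be the commutative ring which is free as a $\mathbb{Z}$-module with basis $X_{k,0},\dots,X_{k,k}$ and multiplication $X_{k,i}X_{k,j}=p^{k-\max(i,j)}X_{k,\min(i,j)}$; thus $X_{k,k}=1$, and an integer $n$ is identified with $nX_{k,k}$. For $0\le k\le\ell\le r$ define: the additive map $\mathrm{ind}^\ell_k:R_k\to R_\ell$, $X_{k,i}\mapsto X_{\ell,i}$; the ring homomorphism $\mathrm{res}^\ell_k:R_\ell\to R_k$, $\mathrm{res}^\ell_k(X_{\ell,i})=p^{\ell-k}X_{k,i}$ if $i\le k$ and $=p^{\ell-i}$ if $i\ge k$; and the multiplicative map $\mathrm{jnd}^\ell_k:R_k\to R_\ell$, $$\mathrm{jnd}^\ell_k\Big(\sum_{i=0}^k m_iX_{k,i}\Big)=m_kX_{\ell,\ell}+\sum_{k\le i<\ell}\frac{m_k^{p^{\ell-i}}-m_k^{p^{\ell-i-1}}}{p^{\ell-i}}X_{\ell,i}+\sum_{0\le i<k}\frac{(\sum_{s=i}^k m_sp^{k-s})^{p^{\ell-k}}-(\sum_{s=i+1}^k m_sp^{k-s})^{p^{\ell-k}}}{p^{\ell-i}}X_{\ell,i}$$ ($m_i\in\mathbb{Z}$). For $k=\ell$ these maps are the identity. These data form the Burnside Tambara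 functor on $\mathbb{Z}/p^r\mathbb{Z}$; keeping indices $\le n$ gives $\Omega_{H_n}$. An ideal of $\Omega_{H_n}$ is a sequence $[I_0,\dots,I_n]$ of ideals $I_k\subseteq R_k$ such that for every $1\le k\le n$: $\mathrm{ind}^k_{k-1}(I_{k-1})\subseteq I_k$, $\mathrm{res}^k_{k-1}(I_k)\subseteq I_{k-1}$, $\mathrm{jnd}^k_{k-1}(I_{k-1})\subseteq I_k$. It is proper if $I_0\ne R_0$. A proper ideal is prime if for all $0\le\ell\le k\le n$, $a\in R_k$, $b\in R_\ell$: whenever $(\mathrm{jnd}^m_i\mathrm{res}^k_i(a))\cdot(\mathrm{jnd}^m_j\mathrm{res}^\ell_j(b))\in I_m$ for all $0\le i\le k$, $0\le j\le\ell$, $m=\max(i,j)$, then $a\in I_k$ or $b\in I_\ell$. *)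

From HB Require Import structures.
From mathcomp Require Import all_boot all_order all_algebra.
Set Implicit Arguments. Unset Strict Implicit. Unset Printing Implicit Defensive.
Import Order.TTheory GRing.Theory Num.Theory.
Local Open Scope ring_scope.

(* R_k : free Z-module with basis X_{k,0..k}; an element sum m_i X_{k,i}
   is represented by its coefficient function i |-> m_i. *)
Definition Rk (k : nat) := {ffun 'I_k.+1 -> int}.

Definition cf (k : nat) (x : Rk k) (t : nat) : int :=
  match ltnP t k.+1 with
  | LtnNotGeq h => x (Ordinal h)
  | _ => 0
  end.

(* multiplication: X_{k,i} X_{k,j} = p^(k - max i j) X_{k, min i j} *)
Definition mulR (p k : nat) (x y : Rk k) : Rk k :=
  [ffun s : 'I_k.+1 => \sum_(i < k.+1) \sum_(j < k.+1)
     (if minn i j == s then x i * y j * (p ^ (k - maxn i j))%:Z else 0)].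

(* ind^l_k : X_{k,i} |-> X_{l,i} *)
Definition ind (k l : nat) (x : Rk k) : Rk l :=
  [ffun s : 'I_l.+1 => cf x s].

(* res^l_k : X_{l,i} |-> p^(l-k) X_{k,i} (i <= k), p^(l-i) X_{k,k} (i >= k) *)
Definition res (p l k : nat) (x : Rk l) : Rk k :=
  [ffun s : 'I_k.+1 =>
     if (s < k)%N then (p ^ (l - k))%:Z * cf x s
     else \sum_(k <= i < l.+1) (p ^ (l - i))%:Z * cf x i].

(* jnd^l_k, by the explicit formula (divisions are exact integer divisions) *)
Definition jnd (p k l : nat) (x : Rk k) : Rk l :=
  [ffun s : 'I_l.+1 =>
     if (s == l :> nat) then cf x k
     else if (k <= s)%N then
       (cf x k ^+ (p ^ (l - s)) - cf x k ^+ (p ^ (l - s - 1))) %/ (p ^ (l - s))%:Z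
     else
       ((\sum_(s <= t < k.+1) cf x t * (p ^ (k - t))%:Z) ^+ (p ^ (l - k))
        - (\sum_(s.+1 <= t < k.+1) cf x t * (p ^ (k - t))%:Z) ^+ (p ^ (l - k)))
         %/ (p ^ (l - s))%:Z]%Z.

Definition ring_ideal (p k : nat) (J : Rk k -> Prop) : Prop :=
  [/\ J 0,
      (forall x y, J x -> J y -> J (x + y)),
      (forall x, J x -> J (- x)) &
      (forall x y, J y -> J (mulR p x y))].

(* I = [I_0, ..., I_n] is an ideal of Omega_{H_n}; only the components
   I k with k <= n are relevant. *)
Definition is_ideal (p n : nat) (I : forall k : nat, Rk k -> Prop) : Prop :=
  (forall k, (k <= n)%N -> ring_ideal p (I k)) /\
  (forall k, (1 <= k)%N -> (k <= n)%N ->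
     [/\ (forall x, I k.-1 x -> I k (@ind k.-1 k x)),
         (forall x, I k x -> I k.-1 (@res p k k.-1 x)) &
         (forall x, I k.-1 x -> I k (@jnd p k.-1 k x))]).

Definition is_proper_ideal (p n : nat) (I : forall k : nat, Rk k -> Prop) : Prop :=
  is_ideal p n I /\ exists a : Rk 0, ~ I 0%N a.

Definition is_prime_ideal (p n : nat) (I : forall k : nat, Rk k -> Prop) : Prop :=
  is_proper_ideal p n I /\
  forall (l k : nat), (l <= k)%N -> (k <= n)%N ->
    forall (a : Rk k) (b : Rk l),
      (forall i j : nat, (i <= k)%N -> (j <= l)%N ->
         I (maxn i j) (mulR p (@jnd p i (maxn i j) (@res p k i a))
                              (@jnd p j (maxn i j) (@res p l j b)))) ->
      I k a \/ I l b.

From mathcomp Require Import all_boot all_order all_algebra.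

(* Every clause in the definitions of an ideal, a proper ideal and a prime
   ideal of Omega_{H_n} only constrains the components I_m with m <= n: the
   ring-ideal and ind/res/jnd closure conditions are indexed by m <= n, the
   properness condition only involves I_0, and the primality condition
   quantifies over pairs of levels l <= m <= n (all the levels max(i, j)
   it mentions are again <= n). *)

Section Restriction.

Variable p : nat.
Variable I : forall m : nat, Rk m -> Prop.

Lemma is_ideal_restrict (i n : nat) :
  (i <= n)%N -> is_ideal p n I -> is_ideal p i I.
Proof.
move=> le_in [ideal_at closed_at]; split=> [m le_mi | m ge1_m le_mi].
- exact/ideal_at/(leq_trans le_mi).
- exact/closed_at/(leq_trans le_mi).
Qed.

(* Properness only refers to I_0, so it survives restriction too. *)
Lemma is_proper_ideal_restrict (i n : nat) :
  (i <= n)%N -> is_proper_ideal p n I -> is_proper_ideal p i I.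
Proof.
by move=> le_in [ideal_n proper0]; split=> //; exact: is_ideal_restrict ideal_n.
Qed.

Lemma is_prime_ideal_restrict (i n : nat) :
  (i <= n)%N -> is_prime_ideal p n I -> is_prime_ideal p i I.
Proof.
move=> le_in [proper_n prime_n]; split.
  exact: is_proper_ideal_restrict proper_n.
by move=> l m le_lm le_mi; apply: prime_n => //; exact: leq_trans le_mi le_in.
Qed.

End Restriction.

Theorem corollary4 (p r i k : nat) (I : forall n : nat, Rk n -> Prop) :
  prime p -> (i <= k)%N -> (k <= r)%N ->
  is_prime_ideal p k I -> is_prime_ideal p i I.
Proof. by move=> _ le_ik _; exact: is_prime_ideal_restrict le_ik. Qed.
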